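(* Let $\lambda=\langle1^{m_1},2^{m_2},\dots,k^{m_k}\rangle$ with all $m_i>0$, $n\ge1$, $x_1,\dots,x_n>0$, $t>0$, and put $M_j=m_j+\dots+m_k$, $M_{k+1}=0$. For $1\le j\le k$, the stationary current of species $j$ in the mTAZRP of type $\lambda$ on $n$ sites, i.e. $\sum_w\pi(w)\,x_1^{-1}t^{d_j(w)}[c_j(w)]_t$ where $\pi$ is the stationary distribution and $c_j(w)$, $d_j(w)$ are the numbers of particles at site $1$ of species $j$ and of species $>j$ respectively, equals $$[M_j]_t\frac{\widetilde H_{\langle1^{M_j-1}\rangle}(x;1,t)}{\widetilde H_{\langle1^{M_j}\rangle}(x;1,t)}-[M_{j+1}]_t\frac{\widetilde H_{\langle1^{M_{j+1}-1}\rangle}(x;1,t)}{\widetilde H_{\langle1^{M_{j+1}}\rangle}(x;1,t)},$$ where the second term is $0$ when $j=k$ and $x=(x_1,\dots,x_n)$.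
   Context: mTAZRP: for a partition $\lambda$ and $n\ge1$, sites $1,\dots,n$ on a ring (site $n+1$ is site $1$); a configuration assigns to each site a multiset of species with union the multiset of parts of $\lambda$; if site $j$ has $c$ particles of species $r$ and $d$ of species larger than $r$, a particle of species $r$ jumps from $j$ to $j+1$ at rate $x_j^{-1}t^d[c]_t$. $\langle1^{m_1},\dots,k^{m_k}\rangle$ is the partition with part $i$ occurring $m_i$ times. Notation: $[a]_t=1+t+\dots+t^{a-1}$ ($[0]_t=0$), $[a]_t!=\prod_{b\le a}[b]_t$, $\begin{bmatrix}m\\ \eta_1,\dots,\eta_n\end{bmatrix}_t=[m]_t!/\prod_i[\eta_i]_t!$, $\widetilde H_{\langle1^m\rangle}(x_1,\dots,x_n;1,t)=\sum_{\eta_1+\dots+\eta_n=m,\ \eta_i\ge0}\begin{bmatrix}m\\ \eta_1,\dots,\eta_n\end{bmatrix}_t\prod_i x_i^{\eta_i}$, with $\widetilde H_{\langle1^0\rangle}=1$. *)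

From mathcomp Require Import all_boot all_order all_algebra.
Set Implicit Arguments. Unset Strict Implicit. Unset Printing Implicit Defensive.
Import GRing.Theory Num.Theory.
Local Open Scope ring_scope.

Definition qint (R : fieldType) (t : R) (a : nat) : R := \sum_(i < a) t ^+ i.
Definition qfact (R : fieldType) (t : R) (a : nat) : R :=
  \prod_(1 <= b < a.+1) qint t b.

(* Htilde_{<1^m>}(x_1..x_n; 1, t) = sum over weak compositions eta of m into
   n parts of the t-multinomial coefficient times prod x_i^eta_i *)
Definition Htilde (R : fieldType) (n : nat) (x : 'I_n -> R) (t : R) (m : nat) : R :=
  \sum_(eta : {ffun 'I_n -> 'I_m.+1} | \sum_(i < n) (eta i : nat) == m)
     (qfact t m / \prod_(i < n) qfact t (eta i)) * \prod_(i < n) x i ^+ eta i.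

(* mTAZRP configurations: sites 'I_n (site 1 = index 0, site i+1 = ordS i,
   cyclically), species 'I_k (index s stands for species s+1);
   w i s = number of particles of species s+1 at site i.  Counts are bounded
   by N (the total number of particles). *)
Definition config (n k N : nat) := {ffun 'I_n -> {ffun 'I_k -> 'I_N.+1}}.

Definition valid n k N (m : 'I_k -> nat) (w : config n k N) : bool :=
  [forall s : 'I_k, \sum_(i < n) (w i s : nat) == m s].

Definition move n k N (w : config n k N) (i : 'I_n) (r : 'I_k) : config n k N :=
  [ffun a => [ffun s => inord ((w a s : nat) - ((a == i) && (s == r))
                                + ((a == ordS i) && (s == r)))]].

Definition jump_rate (R : fieldType) n k N (x : 'I_n -> R) (t : R)
    (w : config n k N) (i : 'I_n) (r : 'I_k) : R :=
  (x i)^-1 * t ^+ (\sum_(s < k | (r < s)%N) (w i s : nat)) * qint t (w i r).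

Definition trans_rate (R : fieldType) n k N (x : 'I_n -> R) (t : R)
    (w w' : config n k N) : R :=
  \sum_(i < n) \sum_(r < k) (if w' == move w i r then jump_rate x t w i r else 0).

Definition stationary (R : realFieldType) n k N (m : 'I_k -> nat)
    (x : 'I_n -> R) (t : R) (pi : config n k N -> R) : Prop :=
  [/\ forall w, valid m w -> 0 <= pi w,
      \sum_(w | valid m w) pi w = 1 &
      forall w', valid m w' ->
        \sum_(w | valid m w) pi w * trans_rate x t w w'
        = pi w' * \sum_(w | valid m w) trans_rate x t w' w].

From mathcomp Require Import all_boot all_order all_algebra zify ring.
Import Order.TTheory GRing.Theory Num.Theory.
Local Open Scope ring_scope.

Set Implicit Arguments.
Unset Strict Implicit.
Unset Printing Implicit Defensive.

(* For each [a], the numbers of particles of species [>= a] at the sites evolve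
   as a single-species inhomogeneous zero-range process: the rates of these
   species at a site telescope to [x_i^-1 [c]_t], where [c] counts them.  So the
   push-forward of [pi] is stationary for that process.  On compositions of [M]
   its stationary measure is unique (a maximum principle for the ratio to
   [prod_i x_i^eta_i / [eta_i]_t!], propagated back to the composition with all
   particles at the first site, which reaches every composition) and equals
   this product weight, normalised by [Htilde_M / [M]_t!].  Removing the
   particle that leaves the first site turns the mean exit rate there into
   [[M]_t Htilde_(M-1) / Htilde_M]; the current of species [j] is the
   difference of these quantities for [a = j] and [a = j + 1]. *)

Section QIntegers.
Variables (R : fieldType) (t : R).

Lemma qint0 : qint t 0 = 0.
Proof. by rewrite /qint big_ord0. Qed.

Lemma qintS b : qint t b.+1 = qint t b + t ^+ b.
Proof. by rewrite /qint big_ord_recr. Qed.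

Lemma qintD a b : qint t (a + b) = qint t b + t ^+ b * qint t a.
Proof.
elim: a => [|a IHa]; first by rewrite add0n qint0 mulr0 addr0.
by rewrite addSn !qintS IHa mulrDr -exprD addrA addnC.
Qed.

Lemma qfactS b : qfact t b.+1 = qfact t b * qint t b.+1.
Proof. by rewrite /qfact big_nat_recr. Qed.

End QIntegers.

Section QIntegersPositive.
Variables (R : realFieldType) (t : R).
Hypothesis t_gt0 : 0 < t.

Lemma qint_ge0 b : 0 <= qint t b.
Proof. by rewrite sumr_ge0 // => i _; rewrite exprn_ge0 // ltW. Qed.

Lemma qint_gt0 b : (0 < b)%N -> 0 < qint t b.
Proof. by case: b => // b _; rewrite qintS ltr_wpDl ?qint_ge0 ?exprn_gt0. Qed.

Lemma qfact_gt0 b : 0 < qfact t b.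
Proof.
elim: b => [|b IHb]; first by rewrite /qfact big_nil ltr01.
by rewrite qfactS mulr_gt0 // qint_gt0.
Qed.

End QIntegersPositive.

Lemma leq_summand (I : finType) (f : I -> nat) i : (f i <= \sum_b f b)%N.
Proof. by rewrite (bigD1 i) //= leq_addr. Qed.

Lemma big_geq_ordS (T : Type) (idx : T) (op : Monoid.com_law idx) k a
    (a_lt_k : (a < k)%N) (F : 'I_k -> T) :
  \big[op/idx]_(s < k | (a <= s)%N) F s
  = op (F (Ordinal a_lt_k)) (\big[op/idx]_(s < k | (a < s)%N) F s).
Proof.
rewrite (bigD1 (Ordinal a_lt_k)) //=; congr (op _ _); apply: eq_bigl => s.
by rewrite -val_eqE /= ltn_neqAle andbC eq_sym.
Qed.

Lemma big_geq_ord0 (T : Type) (idx : T) (op : Monoid.com_law idx) k a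
    (k_le_a : (k <= a)%N) (F : 'I_k -> T) :
  \big[op/idx]_(s < k | (a <= s)%N) F s = idx.
Proof.
by rewrite big_pred0 // => s; apply/negbTE; rewrite -ltnNge (leq_trans _ k_le_a).
Qed.

(* The power of [t] counts the particles of higher species, so the rates telescope. *)
Lemma sum_qint_geq (R : fieldType) (t : R) k (c : 'I_k -> nat) a :
  \sum_(r < k | (a <= r)%N) t ^+ (\sum_(s < k | (r < s)%N) c s) * qint t (c r)
  = qint t (\sum_(s < k | (a <= s)%N) c s).
Proof.
have [d] := ubnP (k - a); elim: d a => // d IHd a lt_ka.
have [k_le_a|a_lt_k] := leqP k a; first by rewrite !big_geq_ord0 // qint0.
by rewrite !(big_geq_ordS _ a_lt_k) qintD IHd 1?addrC //; lia.
Qed.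

Section Hops.
Variable n : nat.
Implicit Types (phi : {ffun 'I_n -> nat}) (i : 'I_n).

Definition hop i phi : {ffun 'I_n -> nat} :=
  [ffun b => (phi b - (b == i) + (b == ordS i))%N].

Lemma sum_indicator i : (\sum_(b < n) (b == i) = 1)%N.
Proof. by rewrite (bigD1 i) //= eqxx big1 // => b /negbTE ->. Qed.

Definition decr i phi : {ffun 'I_n -> nat} := [ffun b => (phi b - (b == i))%N].

Definition incr i phi : {ffun 'I_n -> nat} := [ffun b => (phi b + (b == i))%N].

Lemma incrK phi i : decr i (incr i phi) = phi.
Proof. by apply/ffunP => b; rewrite !ffunE addnK. Qed.

Lemma decrK phi i : (0 < phi i)%N -> incr i (decr i phi) = phi.
Proof.
by move=> phi_i_gt0; apply/ffunP => b; rewrite !ffunE subnK //; case: eqP => // ->.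
Qed.

Definition unhop i phi : {ffun 'I_n -> nat} :=
  [ffun b => (phi b + (b == i) - (b == ordS i))%N].

Lemma sum_decr phi i : (0 < phi i)%N -> (\sum_b decr i phi b = (\sum_b phi b).-1)%N.
Proof.
move=> phi_i_gt0; under eq_bigr do rewrite ffunE.
rewrite (bigD1 i) //= [in RHS](bigD1 i) //= eqxx subn1.
rewrite (eq_bigr phi) => [|b /negbTE ->]; last exact: subn0.
by case: (phi i) phi_i_gt0.
Qed.

Lemma sum_hop phi i : (0 < phi i)%N -> (\sum_b hop i phi b = \sum_b phi b)%N.
Proof.
move=> phi_i_gt0; have sum_gt0 := leq_trans phi_i_gt0 (leq_summand phi i).
rewrite -(prednK sum_gt0) -(sum_decr phi_i_gt0) -addn1 -(sum_indicator (ordS i)).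
rewrite -big_split.
by apply: eq_bigr => b _; rewrite !ffunE.
Qed.

Lemma hopK phi i : (0 < phi i)%N -> unhop i (hop i phi) = phi.
Proof.
move=> phi_i_gt0; apply/ffunP => b; rewrite !ffunE addnAC addnK subnK //.
by case: eqP => // ->.
Qed.

Lemma unhopK phi i : (0 < phi (ordS i))%N -> hop i (unhop i phi) = phi.
Proof.
move=> phi_gt0; apply/ffunP => b; rewrite !ffunE subnAC addnK subnK //.
by case: eqP => // ->.
Qed.

Lemma hop_ordS_gt0 phi i : (0 < hop i phi (ordS i))%N.
Proof. by rewrite ffunE eqxx addn1. Qed.

Lemma unhop_gt0 phi i : (0 < phi (ordS i))%N -> (0 < unhop i phi i)%N.
Proof. by rewrite ffunE eqxx addn1; case: eqP => [<-|_]; rewrite ?subn1 ?subn0. Qed.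

Lemma sum_unhop phi i : (0 < phi (ordS i))%N ->
  (\sum_b unhop i phi b = \sum_b phi b)%N.
Proof. by move=> phi_gt0; rewrite -{2}(unhopK phi_gt0) sum_hop ?unhop_gt0. Qed.

Definition spread phi : nat := \sum_(b < n) b * phi b.

Lemma sum_mul_indicator p : (\sum_(b < n) b * (b == p) = p)%N.
Proof.
by rewrite (bigD1 p) //= eqxx muln1 big1 ?addn0 // => b /negbTE ->; rewrite muln0.
Qed.

Lemma spread_unhop phi i : (0 < phi (ordS i))%N ->
  (spread (unhop i phi) + ordS i = spread phi + i)%N.
Proof.
move=> phi_gt0; rewrite /spread -(sum_mul_indicator (ordS i)) -(sum_mul_indicator i).
rewrite -!big_split /=; apply: eq_bigr => b _; rewrite ffunE -!mulnDr subnK //.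
by case: eqP => // ->; rewrite ltn_addr.
Qed.

End Hops.

Section Configurations.
Variables (k : nat) (m : 'I_k -> nat) (n : nat).
Local Notation N := (\sum_(s < k) m s)%N.
Local Notation cfg := (config n k N).
Implicit Types (w : cfg) (i : 'I_n) (r s : 'I_k).

(* Species are 0-based: [occupancy a w] counts the species [a.+1, ..., k] of the paper. *)
Definition occupancy (a : nat) w : {ffun 'I_n -> nat} :=
  [ffun i => \sum_(s < k | (a <= s)%N) (w i s : nat)].

Lemma occupancyE a w i :
  occupancy a w i = (\sum_(s < k | (a <= s)%N) (w i s : nat))%N.
Proof. exact: ffunE. Qed.

Definition column w s : {ffun 'I_n -> nat} := [ffun b => (w b s : nat)].

Lemma valid_sum w : valid m w -> forall s, (\sum_b (w b s : nat))%N = m s.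
Proof. by move=> /forallP valid_w s; apply/eqP/valid_w. Qed.

Lemma sum_column w s : valid m w -> (\sum_b column w s b)%N = m s.
Proof. by move=> valid_w; under eq_bigr do rewrite ffunE; exact: valid_sum. Qed.

Lemma move_entry w i r b s : valid m w -> (0 < w i r)%N ->
  ((move w i r) b s : nat) = if s == r then hop i (column w r) b else w b s.
Proof.
move=> valid_w w_ir_gt0; rewrite !ffunE.
case: (s =P r) => [->|_]; last by rewrite !andbF subn0 addn0 inordK.
rewrite !andbT inordK // ltnS (@leq_trans (\sum_b hop i (column w r) b)) //.
  by have := leq_summand (hop i (column w r)) b; rewrite !ffunE.
by rewrite sum_hop ?ffunE // sum_column // leq_summand.
Qed.

Lemma move_valid w i r : valid m w -> (0 < w i r)%N -> valid m (move w i r).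
Proof.
move=> valid_w w_ir_gt0; apply/forallP => s; apply/eqP.
under eq_bigr do rewrite move_entry //.
case: eqP => [->|_]; last exact: valid_sum.
by rewrite sum_hop ?ffunE // sum_column.
Qed.

Lemma occupancy_move_lt w i r a : valid m w -> (0 < w i r)%N -> (r < a)%N ->
  occupancy a (move w i r) = occupancy a w.
Proof.
move=> valid_w w_ir_gt0 lt_ra; apply/ffunP => b; rewrite !occupancyE.
apply: eq_bigr => s le_as; rewrite move_entry //.
by case: eqP => // eq_sr; move: le_as; rewrite eq_sr leqNgt lt_ra.
Qed.

Lemma occupancy_move_geq w i r a : valid m w -> (0 < w i r)%N -> (a <= r)%N ->
  occupancy a (move w i r) = hop i (occupancy a w).
Proof.
move=> valid_w w_ir_gt0 le_ar; apply/ffunP => b; rewrite [RHS]ffunE !occupancyE.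
rewrite (bigD1 r) //= [in RHS](bigD1 r) //=.
have -> : (\sum_(s < k | (a <= s) && (s != r)) (move w i r b s : nat)
           = \sum_(s < k | (a <= s) && (s != r)) (w b s : nat))%N.
  by apply: eq_bigr => s /andP[_ /negbTE neq_sr]; rewrite move_entry // neq_sr.
rewrite move_entry // eqxx !ffunE.
have le_ibr : ((b == i) <= w b r)%N by case: eqP => // ->.
by rewrite addnAC addnBAC.
Qed.

Lemma occupancy_le_total w a i : valid m w -> (occupancy a w i <= N)%N.
Proof.
move=> valid_w; rewrite ffunE (@leq_trans (\sum_s (w i s : nat))) //.
  by rewrite [X in (_ <= X)%N](bigID (fun s : 'I_k => (a <= s)%N)) leq_addr.
apply: leq_sum => s _; rewrite -(valid_sum valid_w s).
exact: (leq_summand (fun b => (w b s : nat))).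
Qed.

Lemma sum_occupancy w a : valid m w ->
  (\sum_i occupancy a w i = \sum_(s < k | (a <= s)%N) m s)%N.
Proof.
move=> valid_w; under eq_bigr do rewrite ffunE.
by rewrite exchange_big; apply: eq_bigr => s _; rewrite valid_sum.
Qed.

End Configurations.

Definition zrp_rate (R : fieldType) n (x : 'I_n -> R) (t : R)
    (phi : {ffun 'I_n -> nat}) (i : 'I_n) : R :=
  (x i)^-1 * qint t (phi i).

Section Rates.
Variables (R : fieldType) (k : nat) (m : 'I_k -> nat) (n : nat)
  (x : 'I_n -> R) (t : R).
Local Notation N := (\sum_(s < k) m s)%N.
Local Notation cfg := (config n k N).
Implicit Types (w : cfg) (i : 'I_n) (r : 'I_k).

Lemma jump_rate_eq0 w i r : (w i r : nat) = 0%N -> jump_rate x t w i r = 0.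
Proof. by rewrite /jump_rate => ->; rewrite qint0 mulr0. Qed.

Lemma sum_trans_rate w (g : cfg -> R) : valid m w ->
  \sum_(w' | valid m w') trans_rate x t w w' * g w'
  = \sum_i \sum_r jump_rate x t w i r * g (move w i r).
Proof.
move=> valid_w; under eq_bigr do rewrite mulr_suml; rewrite exchange_big /=.
apply: eq_bigr => i _; under eq_bigr do rewrite mulr_suml; rewrite exchange_big /=.
apply: eq_bigr => r _; have [w_ir_eq0|w_ir_gt0] := posnP (w i r).
  rewrite jump_rate_eq0 // mul0r; apply: big1 => w' _.
  by case: eqP => _; rewrite ?jump_rate_eq0 // !mul0r.
rewrite (bigD1 (move w i r)) ?move_valid //= eqxx [X in _ + X]big1 ?addr0 //.
by move=> w' /andP[_ /negbTE ->]; rewrite mul0r.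
Qed.

Lemma sum_jump_rate_geq w i a :
  \sum_(r < k | (a <= r)%N) jump_rate x t w i r = zrp_rate x t (occupancy a w) i.
Proof.
rewrite /zrp_rate occupancyE -sum_qint_geq big_distrr /=.
by apply: eq_bigr => r _; rewrite mulrA.
Qed.

Lemma jump_rate_occupancy w i r :
  jump_rate x t w i r
  = zrp_rate x t (occupancy r w) i - zrp_rate x t (occupancy r.+1 w) i.
Proof.
rewrite -!sum_jump_rate_geq (big_geq_ordS _ (ltn_ord r)) addrK.
by congr jump_rate; apply: val_inj.
Qed.

End Rates.

Section StationaryGenerator.
Variables (R : realFieldType) (k : nat) (m : 'I_k -> nat) (n : nat)
  (x : 'I_n -> R) (t : R).
Local Notation N := (\sum_(s < k) m s)%N.
Local Notation cfg := (config n k N).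
Variable pi : cfg -> R.
Hypothesis pi_stationary : stationary m x t pi.

Lemma stationary_generator_mean (g : cfg -> R) :
  \sum_(w | valid m w) pi w *
    \sum_(w' | valid m w') trans_rate x t w w' * (g w' - g w) = 0.
Proof.
case: pi_stationary => _ _ balance.
under eq_bigr do rewrite (eq_bigr _ (fun _ _ => mulrBr _ _ _)) sumrB mulrBr.
rewrite sumrB; apply/eqP; rewrite subr_eq0; apply/eqP.
under eq_bigr do rewrite big_distrr /=.
rewrite exchange_big /=; apply: eq_bigr => w' valid_w'.
under eq_bigr do rewrite mulrA.
by rewrite -mulr_suml balance // -mulrA mulr_suml.
Qed.

Lemma lumped_generator_mean a (G : {ffun 'I_n -> nat} -> R) :
  \sum_(w | valid m w) pi w * \sum_i zrp_rate x t (occupancy a w) i *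
    (G (hop i (occupancy a w)) - G (occupancy a w)) = 0.
Proof.
rewrite -[RHS](stationary_generator_mean (G \o occupancy a)).
apply: eq_bigr => w valid_w; congr (_ * _); rewrite sum_trans_rate //.
apply: eq_bigr => i _; rewrite -sum_jump_rate_geq mulr_suml.
rewrite [RHS](bigID (fun r : 'I_k => (a <= r)%N)) /= [X in _ = _ + X]big1 ?addr0.
  apply: eq_bigr => r le_ar; have [w_ir_eq0|w_ir_gt0] := posnP (w i r).
    by rewrite jump_rate_eq0 // !mul0r.
  by rewrite occupancy_move_geq.
move=> r; rewrite -ltnNge => lt_ra; have [w_ir_eq0|w_ir_gt0] := posnP (w i r).
  by rewrite jump_rate_eq0 // mul0r.
by rewrite occupancy_move_lt // subrr mulr0.
Qed.

End StationaryGenerator.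

(* [Htilde] sums over compositions with entries in ['I_B.+1]; [valf] and
   [to_comp] move between these and [nat]-valued ones ([inord] truncates). *)
Definition valf n B (eta : {ffun 'I_n -> 'I_B.+1}) : {ffun 'I_n -> nat} :=
  [ffun i => (eta i : nat)].

Definition to_comp n B (phi : {ffun 'I_n -> nat}) : {ffun 'I_n -> 'I_B.+1} :=
  [ffun i => inord (phi i)].
Arguments to_comp {n} B phi.

Section Compositions.
Variables (n B : nat).
Implicit Types (eta : {ffun 'I_n -> 'I_B.+1}) (phi : {ffun 'I_n -> nat}).

Lemma valfE eta i : valf eta i = eta i.
Proof. exact: ffunE. Qed.

Lemma valf_inj : injective (@valf n B).
Proof.
move=> eta1 eta2 eq_valf; apply/ffunP => i; apply/val_inj.
by rewrite /= -!valfE eq_valf.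
Qed.

Lemma valf_to_comp_le phi : (forall i, phi i <= B)%N -> valf (to_comp B phi) = phi.
Proof. by move=> phi_le_B; apply/ffunP => i; rewrite !ffunE inordK // ltnS. Qed.

Lemma valf_to_comp phi : (\sum_i phi i <= B)%N -> valf (to_comp B phi) = phi.
Proof.
move=> sum_le_B; apply: valf_to_comp_le => i.
exact: leq_trans (leq_summand phi i) sum_le_B.
Qed.

Lemma valf_le_sum eta i : (valf eta i <= \sum_b valf eta b)%N.
Proof. exact: leq_summand. Qed.

Lemma to_comp_valf eta : to_comp B (valf eta) = eta.
Proof. by apply/ffunP => i; rewrite !ffunE inord_val. Qed.

End Compositions.

Section ZeroRangeWeights.
Variables (R : realFieldType) (n : nat) (x : 'I_n -> R) (t : R).
Hypotheses (x_gt0 : forall i, 0 < x i) (t_gt0 : 0 < t).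
Implicit Types (phi psi : {ffun 'I_n -> nat}) (i : 'I_n).

Definition site_weight i (e : nat) : R := x i ^+ e / qfact t e.

Definition zrp_weight phi : R := \prod_i site_weight i (phi i).

Lemma zrp_weight_gt0 phi : 0 < zrp_weight phi.
Proof.
by apply: prodr_gt0 => i _; rewrite divr_gt0 ?exprn_gt0 ?qfact_gt0.
Qed.

Lemma zrp_rate_ge0 phi i : 0 <= zrp_rate x t phi i.
Proof. by rewrite mulr_ge0 ?invr_ge0 ?(ltW (x_gt0 i)) ?qint_ge0. Qed.

Lemma zrp_rate_gt0 phi i : (0 < phi i)%N -> 0 < zrp_rate x t phi i.
Proof. by move=> phi_i_gt0; rewrite mulr_gt0 ?invr_gt0 ?x_gt0 ?qint_gt0. Qed.

Lemma zrp_rate_eq0 phi i : phi i = 0%N -> zrp_rate x t phi i = 0.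
Proof. by rewrite /zrp_rate => ->; rewrite qint0 mulr0. Qed.

Lemma site_weightS i e :
  site_weight i e.+1 * ((x i)^-1 * qint t e.+1) = site_weight i e.
Proof.
rewrite /site_weight qfactS exprS.
have x_neq0 : x i != 0 by rewrite gt_eqF.
have qint_neq0 : qint t e.+1 != 0 by rewrite gt_eqF ?qint_gt0.
have qfact_neq0 : qfact t e != 0 by rewrite gt_eqF ?qfact_gt0.
by field; rewrite x_neq0 qint_neq0 qfact_neq0.
Qed.

Lemma zrp_weight_decr phi i : (0 < phi i)%N ->
  zrp_weight (decr i phi) = zrp_weight phi * zrp_rate x t phi i.
Proof.
move=> phi_i_gt0; rewrite /zrp_weight (bigD1 i) //= [in RHS](bigD1 i) //=.
rewrite (eq_bigr (fun b => site_weight b (phi b))) => [|b /negbTE neq_bi]; last first.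
  by rewrite ffunE neq_bi subn0.
rewrite ffunE eqxx subn1 /zrp_rate -(prednK phi_i_gt0) -site_weightS /=.
by rewrite mulrAC.
Qed.

(* Both sides are the weight of [psi] with the hopping particle removed. *)
Lemma zrp_weight_hop psi i : (0 < psi i)%N ->
  zrp_weight psi * zrp_rate x t psi i
  = zrp_weight (hop i psi) * zrp_rate x t (hop i psi) (ordS i).
Proof.
move=> psi_i_gt0; rewrite -!zrp_weight_decr ?hop_ordS_gt0 //; congr zrp_weight.
by apply/ffunP => b; rewrite !ffunE addnK.
Qed.

End ZeroRangeWeights.

Section ZeroRangeBalance.
Variables (R : realFieldType) (n : nat) (x : 'I_n -> R) (t : R) (B : nat).
Hypotheses (x_gt0 : forall i, 0 < x i) (t_gt0 : 0 < t).
Local Notation comp := {ffun 'I_n -> 'I_B.+1}.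
Local Notation rate := (zrp_rate x t).
Local Notation weight := (zrp_weight x t).
Implicit Types (phi : {ffun 'I_n -> nat}) (eta : comp).

Definition inflow phi eta : R :=
  \sum_i rate (valf eta) i * (hop i (valf eta) == phi)%:R.

Definition exit_rate phi : R := \sum_i rate phi i.

Lemma inflow_ge0 phi eta : 0 <= inflow phi eta.
Proof. by apply: sumr_ge0 => i _; rewrite mulr_ge0 ?zrp_rate_ge0 ?ler0n. Qed.

Lemma inflow_site phi i : (\sum_b phi b <= B)%N ->
  \sum_(eta : comp) weight (valf eta) * rate (valf eta) i * (hop i (valf eta) == phi)%:R
  = weight phi * rate phi (ordS i).
Proof.
move=> sum_le_B.
have hop_term_eq0 (eta : comp) : (valf eta i = 0)%N \/ hop i (valf eta) != phi ->
    weight (valf eta) * rate (valf eta) i * (hop i (valf eta) == phi)%:R = 0.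
  by case=> [/zrp_rate_eq0 ->|/negbTE ->]; rewrite ?mulr0 ?mul0r.
have [phi_eq0|phi_gt0] := posnP (phi (ordS i)).
  rewrite zrp_rate_eq0 // mulr0; apply: big1 => eta _; apply: hop_term_eq0.
  have [|valf_gt0] := posnP (valf eta i); [by left | right].
  by apply: contra_eqN phi_eq0 => /eqP <-; rewrite -lt0n hop_ordS_gt0.
have sum_unhop_le : (\sum_b unhop i phi b <= B)%N by rewrite sum_unhop.
rewrite (bigD1 (to_comp B (unhop i phi))) //= valf_to_comp // unhopK // eqxx.
rewrite mulr1 zrp_weight_hop ?unhop_gt0 // unhopK // big1 ?addr0 // => eta.
move=> neq_eta; apply: hop_term_eq0.
have [|valf_gt0] := posnP (valf eta i); [by left | right].
apply: contra neq_eta => /eqP eq_hop; apply/eqP/valf_inj.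
by rewrite valf_to_comp // -eq_hop hopK.
Qed.

Lemma zrp_weight_balance phi : (\sum_b phi b <= B)%N ->
  \sum_(eta : comp) weight (valf eta) * inflow phi eta = weight phi * exit_rate phi.
Proof.
move=> sum_le_B; under eq_bigr do rewrite /inflow big_distrr /=.
rewrite exchange_big /= /exit_rate [in RHS](reindex_inj (@ordS_inj n)) big_distrr /=.
apply: eq_bigr => i _; rewrite -inflow_site //.
by apply: eq_bigr => eta _; rewrite mulrA.
Qed.

End ZeroRangeBalance.

Section ZeroRangeUniqueness.
Variables (R : realFieldType) (n : nat) (x : 'I_n -> R) (t : R) (B M : nat).
Hypotheses (x_gt0 : forall i, 0 < x i) (t_gt0 : 0 < t) (M_le_B : (M <= B)%N)
  (n_gt0 : (0 < n)%N).
Local Notation comp := {ffun 'I_n -> 'I_B.+1}.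
Local Notation rate := (zrp_rate x t).
Local Notation weight := (zrp_weight x t).
Local Notation inflow := (inflow x t).
Local Notation exit_rate := (exit_rate x t).
Implicit Types (eta : comp) (f g : comp -> R).

Definition on_level eta := (\sum_i valf eta i == M)%N.

Lemma on_level_le eta : on_level eta -> (\sum_i valf eta i <= B)%N.
Proof. by move/eqP ->. Qed.

Lemma inflow_off_level eta' eta : on_level eta' -> ~~ on_level eta ->
  inflow (valf eta') eta = 0.
Proof.
move=> on_eta' off_eta; apply: big1 => i _.
have [/zrp_rate_eq0 ->|valf_gt0] := posnP (valf eta i); first by rewrite mul0r.
case: eqP => [eq_hop|_]; last by rewrite mulr0.
by move: off_eta; rewrite /on_level -(sum_hop valf_gt0) eq_hop (eqP on_eta') eqxx.
Qed.

Lemma sum_inflow_on_level (F : comp -> R) eta' : on_level eta' ->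
  \sum_(eta | on_level eta) F eta * inflow (valf eta') eta
  = \sum_eta F eta * inflow (valf eta') eta.
Proof.
move=> on_eta'; rewrite [RHS](bigID on_level) /= [X in _ = _ + X]big1 ?addr0 //.
by move=> eta off_eta; rewrite inflow_off_level ?mulr0.
Qed.

Definition balanced f := forall eta', on_level eta' ->
  \sum_(eta | on_level eta) f eta * inflow (valf eta') eta
  = f eta' * exit_rate (valf eta').

Lemma balanced_weight : balanced (fun eta => weight (valf eta)).
Proof.
by move=> eta' on_eta'; rewrite sum_inflow_on_level // zrp_weight_balance ?on_level_le.
Qed.

Lemma balancedZ c f : balanced f -> balanced (fun eta => c * f eta).
Proof.
move=> bal_f eta' on_eta'; under eq_bigr do rewrite -mulrA.
by rewrite -big_distrr /= bal_f // mulrA.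
Qed.

Lemma balancedB f g : balanced f -> balanced g -> balanced (fun eta => f eta - g eta).
Proof.
move=> bal_f bal_g eta' on_eta'; under eq_bigr do rewrite mulrBl.
by rewrite sumrB bal_f // bal_g // mulrBl.
Qed.

Lemma balanced_of_generator f :
  (forall eta', \sum_eta f eta * \sum_i rate (valf eta) i *
     ((hop i (valf eta) == valf eta')%:R - (valf eta == valf eta')%:R) = 0) ->
  balanced f.
Proof.
move=> gen_f eta' on_eta'; rewrite sum_inflow_on_level // /inflow /exit_rate.
have := gen_f eta'.
under eq_bigr do rewrite (eq_bigr _ (fun i _ => mulrBr _ _ _)) sumrB mulrBr -mulr_suml.
rewrite sumrB [X in _ - X](bigD1 eta') //= eqxx mulr1 [X in _ - (_ + X)]big1.
  by rewrite addr0 => /subr0_eq.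
by move=> eta /negbTE neq_eta; rewrite (inj_eq (@valf_inj n B)) neq_eta mulr0 mulr0.
Qed.

Definition pile_nat : {ffun 'I_n -> nat} :=
  [ffun b : 'I_n => if val b == 0%N then M else 0%N].

Definition pile : comp := to_comp B pile_nat.

Lemma sum_pile_nat : (\sum_b pile_nat b = M)%N.
Proof.
rewrite (bigD1 (Ordinal n_gt0)) //= ffunE eqxx big1 ?addn0 // => b.
by rewrite ffunE -val_eqE => /negbTE ->.
Qed.

Lemma valf_pile : valf pile = pile_nat.
Proof. by rewrite valf_to_comp // sum_pile_nat. Qed.

Lemma pile_on_level : on_level pile.
Proof. by rewrite /on_level valf_pile sum_pile_nat. Qed.

Lemma on_level_off_pile eta : on_level eta -> eta != pile ->
  exists2 p : 'I_n, (0 < p)%N & (0 < valf eta p)%N.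
Proof.
move=> on_eta neq_pile.
have [p /andP[p_gt0 valf_gt0]|no_p] :=
  pickP (fun p : 'I_n => (0 < p) && (0 < valf eta p))%N.
  by exists p.
have valf_eq0 b : val b != 0%N -> valf eta b = 0%N.
  by move=> b_neq0; move: (no_p b); rewrite lt0n b_neq0 /= lt0n => /negbFE/eqP.
exfalso; move/eqP: neq_pile; apply; apply: valf_inj; rewrite valf_pile.
apply/ffunP => b; rewrite [RHS]ffunE; case: ifPn => [/eqP b_eq0|]; last exact: valf_eq0.
rewrite -(eqP on_eta) (bigD1 b) //= big1 ?addn0 // => b' neq_b'.
apply: valf_eq0; apply: contraNneq neq_b' => b'_eq0.
by apply/eqP/val_inj; rewrite /= b'_eq0 b_eq0.
Qed.

Lemma exists_inflow_pred eta' : on_level eta' -> eta' != pile ->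
  exists eta, [/\ on_level eta, 0 < inflow (valf eta') eta
                & (spread (valf eta) < spread (valf eta'))%N].
Proof.
move=> on_eta' /(on_level_off_pile on_eta')[p p_gt0 valf_p_gt0].
have q_lt_n : (p.-1 < n)%N by rewrite (leq_ltn_trans (leq_pred p)).
set q := Ordinal q_lt_n.
have ordS_q : ordS q = p by apply/val_inj; rewrite /= prednK // modn_small.
have lt_qp : (q < p)%N by rewrite /= ltn_predL.
have valf_ordS_gt0 : (0 < valf eta' (ordS q))%N by rewrite ordS_q.
set psi := unhop q (valf eta').
have sum_psi : (\sum_b psi b = M)%N by rewrite sum_unhop // (eqP on_eta').
exists (to_comp B psi); rewrite valf_to_comp ?sum_psi //; split.
- by rewrite /on_level valf_to_comp sum_psi.
- rewrite /inflow valf_to_comp ?sum_psi // (bigD1 q) //= /psi unhopK // eqxx mulr1.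
  apply: (lt_le_trans (zrp_rate_gt0 x_gt0 t_gt0 (unhop_gt0 valf_ordS_gt0))).
  rewrite lerDl sumr_ge0 // => i _.
  by rewrite mulr_ge0 ?ler0n ?(zrp_rate_ge0 x_gt0 t_gt0).
- by have := spread_unhop valf_ordS_gt0; rewrite ordS_q -/psi; lia.
Qed.

Lemma balanced_ge0_eq0_pred f eta' eta : balanced f ->
  (forall e, on_level e -> 0 <= f e) -> on_level eta' -> f eta' = 0 ->
  on_level eta -> 0 < inflow (valf eta') eta -> f eta = 0.
Proof.
move=> bal_f f_ge0 on_eta' f_eta'_eq0 on_eta inflow_gt0.
have f_inflow_ge0 e : on_level e -> 0 <= f e * inflow (valf eta') e.
  by move=> on_e; rewrite mulr_ge0 ?f_ge0 ?(inflow_ge0 x_gt0 t_gt0).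
have sum_eq0 : \sum_(e | on_level e) f e * inflow (valf eta') e = 0.
  by rewrite bal_f // f_eta'_eq0 mul0r.
have /eqP := psumr_eq0P f_inflow_ge0 sum_eq0 on_eta.
by rewrite mulf_eq0 (gt_eqF inflow_gt0) orbF => /eqP.
Qed.

Lemma balanced_ge0_eq0_pile f eta : balanced f ->
  (forall e, on_level e -> 0 <= f e) -> on_level eta -> f eta = 0 -> f pile = 0.
Proof.
move=> bal_f f_ge0; have [d] := ubnP (spread (valf eta)).
elim: d eta => // d IHd eta lt_spread on_eta f_eta_eq0.
have [<- //|neq_pile] := eqVneq eta pile.
have [eta2 [on_eta2 inflow_gt0 lt_spread2]] := exists_inflow_pred on_eta neq_pile.
apply: (IHd eta2) => //; first exact: leq_trans lt_spread2 _.
exact: balanced_ge0_eq0_pred on_eta f_eta_eq0 on_eta2 inflow_gt0.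
Qed.

Lemma balanced_le_eq_pile f g eta : balanced f -> balanced g ->
  (forall e, on_level e -> g e <= f e) -> on_level eta -> f eta = g eta ->
  f pile = g pile.
Proof.
move=> bal_f bal_g le_gf on_eta eq_fg; apply/eqP; rewrite -subr_eq0; apply/eqP.
apply: (balanced_ge0_eq0_pile (balancedB bal_f bal_g)) on_eta _.
  by move=> e on_e; rewrite subr_ge0 le_gf.
by rewrite eq_fg subrr.
Qed.

(* Maximum principle: the extreme values of [f / weight] on the level set
   both propagate to [pile]. *)
Lemma balanced_proportional f : balanced f ->
  exists c, forall eta, on_level eta -> f eta = c * weight (valf eta).
Proof.
move=> bal_f; pose ratio eta := f eta / weight (valf eta).
have weight_gt0 eta : 0 < weight (valf eta) by exact: zrp_weight_gt0.
have ratioK eta : ratio eta * weight (valf eta) = f eta.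
  by rewrite divfK ?gt_eqF.
have bal_cweight c : balanced (fun eta => c * weight (valf eta)).
  exact/balancedZ/balanced_weight.
have [emax on_emax max_ratio] := arg_maxP ratio pile_on_level.
have [emin on_emin min_ratio] := arg_minP ratio pile_on_level.
have le_max eta : on_level eta -> f eta <= ratio emax * weight (valf eta).
  by move=> on_eta; rewrite -ler_pdivrMr //; exact: max_ratio.
have ge_min eta : on_level eta -> ratio emin * weight (valf eta) <= f eta.
  by move=> on_eta; rewrite -ler_pdivlMr //; exact: min_ratio.
have pile_max := balanced_le_eq_pile (bal_cweight _) bal_f le_max on_emax (ratioK _).
have pile_min :=
  balanced_le_eq_pile bal_f (bal_cweight _) ge_min on_emin (esym (ratioK _)).
have eq_ratio : ratio emax = ratio emin.
  by apply: (mulIf (lt0r_neq0 (weight_gt0 pile))); rewrite pile_max pile_min.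
exists (ratio emax) => eta on_eta; apply/eqP; rewrite eq_le le_max //=.
by rewrite eq_ratio ge_min.
Qed.

End ZeroRangeUniqueness.

Definition comp_sum (R : nmodType) n B M (G : {ffun 'I_n -> nat} -> R) : R :=
  \sum_(eta : {ffun 'I_n -> 'I_B.+1} | (\sum_i valf eta i == M)%N) G (valf eta).

Lemma comp_sum_bound (R : nmodType) n B M (G : {ffun 'I_n -> nat} -> R) :
  (M <= B)%N -> comp_sum B M G = comp_sum M M G.
Proof.
move=> M_le_B; rewrite /comp_sum.
rewrite (reindex_onto (fun eta => to_comp B (valf eta))
                     (fun eta => to_comp M (valf eta))) /=.
  have valf_widen (eta : {ffun 'I_n -> 'I_M.+1}) : valf (to_comp B (valf eta)) = valf eta.
    by apply: valf_to_comp_le => i; rewrite valfE -ltnS (leq_trans (ltn_ord _)).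
  apply: eq_big => eta; last by rewrite valf_widen.
  by rewrite valf_widen to_comp_valf eqxx andbT.
move=> eta /eqP sum_eta; apply: valf_inj.
by rewrite !valf_to_comp ?sum_eta // valf_to_comp sum_eta.
Qed.

Section PartitionFunction.
Variables (R : realFieldType) (n : nat) (x : 'I_n -> R) (t : R).
Hypotheses (x_gt0 : forall i, 0 < x i) (t_gt0 : 0 < t).
Local Notation rate := (zrp_rate x t).
Local Notation weight := (zrp_weight x t).

Lemma Htilde_weight M : Htilde x t M = qfact t M * comp_sum M M weight.
Proof.
rewrite /Htilde /comp_sum big_distrr /=; apply: eq_big => [eta|eta _].
  by congr (_ == _); apply: eq_bigr => i _; rewrite valfE.
have valf_powers : \prod_i x i ^+ valf eta i = \prod_i x i ^+ eta i.
  by apply: eq_bigr => i _; rewrite valfE.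
have valf_qfacts : \prod_i qfact t (valf eta i) = \prod_i qfact t (eta i).
  by apply: eq_bigr => i _; rewrite valfE.
by rewrite /zrp_weight /site_weight prodf_div valf_powers valf_qfacts mulrAC mulrA.
Qed.

(* Removing the particle that leaves site [i] is a bijection from
   compositions of [M.+1] with [i] occupied onto compositions of [M]. *)
Lemma comp_sum_rate B M i : (M < B)%N ->
  comp_sum B M.+1 (fun phi => weight phi * rate phi i) = comp_sum B M weight.
Proof.
move=> M_lt_B; rewrite /comp_sum.
pose dec (eta : {ffun 'I_n -> 'I_B.+1}) := to_comp B (decr i (valf eta)).
pose inc (eta : {ffun 'I_n -> 'I_B.+1}) := to_comp B (incr i (valf eta)).
have valf_le_B (eta : {ffun 'I_n -> 'I_B.+1}) b : (valf eta b <= B)%N.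
  by rewrite valfE -ltnS.
have valf_dec eta : valf (dec eta) = decr i (valf eta).
  by apply: valf_to_comp_le => b; rewrite ffunE (leq_trans (leq_subr _ _)).
have valf_inc eta : (valf eta i < B)%N -> valf (inc eta) = incr i (valf eta).
  move=> lt_iB; apply: valf_to_comp_le => b; rewrite ffunE.
  by case: eqP => [->|_]; rewrite ?addn1 ?addn0.
rewrite [RHS](reindex_onto dec inc) /=; last first.
  move=> eta /eqP sum_eta; apply: valf_inj; rewrite valf_dec valf_inc ?incrK //.
  by rewrite (leq_ltn_trans _ M_lt_B) // -sum_eta valf_le_sum.
rewrite big_mkcond [RHS]big_mkcond; apply: eq_bigr => eta _; rewrite valf_dec.
have [eta_i_eq0|eta_i_gt0] := posnP (valf eta i).
  rewrite zrp_rate_eq0 // mulr0 if_same; case: ifP => // /andP[_ /eqP inc_dec].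
  have lt_iB : (valf (dec eta) i < B)%N.
    by rewrite valf_dec ffunE eta_i_eq0 (leq_ltn_trans _ M_lt_B).
  have := congr1 (fun e => valf e i) inc_dec.
  by rewrite /= valf_inc // valf_dec !ffunE eqxx -valfE eta_i_eq0.
have sum_gt0 : (0 < \sum_b valf eta b)%N by apply: leq_trans eta_i_gt0 (valf_le_sum _ _).
rewrite /inc valf_dec decrK // to_comp_valf eqxx andbT sum_decr //.
by rewrite -[in X in X == M.+1](prednK sum_gt0) eqSS zrp_weight_decr.
Qed.

Lemma normalized_comp_sum_rate B M c i : (M <= B)%N ->
  c * comp_sum B M weight = 1 ->
  c * comp_sum B M (fun phi => weight phi * rate phi i)
  = qint t M * Htilde x t (M - 1) / Htilde x t M.
Proof.
case: M => [|M] le_MB normalized.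
  rewrite qint0 !mul0r /comp_sum big1 ?mulr0 // => eta /eqP sum_eq0.
  by rewrite zrp_rate_eq0 ?mulr0 //; apply/eqP; rewrite -leqn0 -sum_eq0 valf_le_sum.
rewrite comp_sum_rate // subn1 /= !Htilde_weight qfactS -(comp_sum_bound _ le_MB).
rewrite -(comp_sum_bound _ (ltnW le_MB)).
have S_neq0 : comp_sum B M.+1 weight != 0.
  apply/eqP => S_eq0; move: normalized.
  by rewrite S_eq0 mulr0 => /esym/eqP; rewrite oner_eq0.
have -> : c = (comp_sum B M.+1 weight)^-1.
  by apply: (mulIf S_neq0); rewrite normalized mulVf.
have qint_neq0 : qint t M.+1 != 0 by rewrite gt_eqF ?qint_gt0.
have qfact_neq0 : qfact t M != 0 by rewrite gt_eqF ?qfact_gt0.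
by field; rewrite S_neq0 qint_neq0 qfact_neq0.
Qed.

End PartitionFunction.

Section SpeciesCurrent.
Variables (R : realFieldType) (k : nat) (m : 'I_k -> nat) (n : nat)
  (x : 'I_n -> R) (t : R).
Local Notation N := (\sum_(s < k) m s)%N.
Local Notation cfg := (config n k N).
Local Notation comp := {ffun 'I_n -> 'I_N.+1}.
Variable pi : cfg -> R.
Hypotheses (pi_stationary : stationary m x t pi) (n_gt0 : (0 < n)%N)
  (x_gt0 : forall i, 0 < x i) (t_gt0 : 0 < t).
Variable a : nat.
Local Notation M := (\sum_(s < k | (a <= s)%N) m s)%N.

Definition lump (w : cfg) : comp := to_comp N (occupancy a w).

Definition lumped_measure (eta : comp) : R :=
  \sum_(w | valid m w && (lump w == eta)) pi w.

Lemma valf_lump w : valid m w -> valf (lump w) = occupancy a w.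
Proof. by move=> valid_w; apply: valf_to_comp_le => i; apply: occupancy_le_total. Qed.

Lemma sum_lumped_measure (F : {ffun 'I_n -> nat} -> R) :
  \sum_(w | valid m w) pi w * F (occupancy a w)
  = \sum_(eta : comp) lumped_measure eta * F (valf eta).
Proof.
rewrite (partition_big lump predT) //=; apply: eq_bigr => eta _.
rewrite big_distrl /=; apply: eq_bigr => w /andP[valid_w /eqP <-].
by rewrite valf_lump.
Qed.

Lemma lumped_measure_total : \sum_(eta : comp) lumped_measure eta = 1.
Proof.
case: pi_stationary => _ pi_total _; rewrite -pi_total.
have := sum_lumped_measure (fun _ => 1).
by under eq_bigr do rewrite mulr1; under [in RHS]eq_bigr do rewrite mulr1.
Qed.

Lemma lumped_measure_off_level eta : ~~ on_level M eta -> lumped_measure eta = 0.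
Proof.
move=> off_eta; apply: big1 => w /andP[valid_w /eqP lump_w].
by move: off_eta; rewrite /on_level -lump_w valf_lump // sum_occupancy // eqxx.
Qed.

Lemma lumped_measure_balanced : balanced x t M lumped_measure.
Proof.
apply: balanced_of_generator => eta'.
rewrite -(sum_lumped_measure (fun phi => \sum_i zrp_rate x t phi i *
          ((hop i phi == valf eta')%:R - (phi == valf eta')%:R))).
exact: (lumped_generator_mean pi_stationary a (fun phi => (phi == valf eta')%:R)).
Qed.

Lemma current_geq :
  \sum_(w | valid m w) pi w * zrp_rate x t (occupancy a w) (Ordinal n_gt0)
  = qint t M * Htilde x t (M - 1) / Htilde x t M.
Proof.
have M_le_N : (M <= N)%N.
  by rewrite [leqRHS](bigID (fun s : 'I_k => (a <= s)%N)) leq_addr.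
have [c lumped_eq] := balanced_proportional x_gt0 t_gt0 M_le_N n_gt0
                                            lumped_measure_balanced.
have lumped_sum (F : {ffun 'I_n -> nat} -> R) :
    \sum_(eta : comp) lumped_measure eta * F (valf eta)
    = c * comp_sum N M (fun phi => zrp_weight x t phi * F phi).
  rewrite /comp_sum big_distrr [RHS]big_mkcond /=; apply: eq_bigr => eta _.
  case: ifPn => [on_eta|off_eta]; first by rewrite lumped_eq // mulrA.
  by rewrite lumped_measure_off_level ?mul0r ?mulr0.
pose rate1 phi := zrp_rate x t phi (Ordinal n_gt0).
rewrite (sum_lumped_measure rate1) (lumped_sum rate1).
apply: normalized_comp_sum_rate => //.
rewrite -lumped_measure_total.
transitivity (c * comp_sum N M (fun phi => zrp_weight x t phi * 1)).
  by rewrite /comp_sum; congr (_ * _); apply: eq_bigr => eta _; rewrite mulr1.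
by rewrite -lumped_sum; apply: eq_bigr => eta _; rewrite mulr1.
Qed.

End SpeciesCurrent.

Theorem theorem7 (R : realFieldType) (k : nat) (m : 'I_k -> nat)
    (hm : forall s, (0 < m s)%N) (n : nat) (hn : (0 < n)%N)
    (x : 'I_n -> R) (hx : forall i, 0 < x i) (t : R) (ht : 0 < t)
    (pi : config n k (\sum_(s < k) m s) -> R)
    (hpi : stationary m x t pi) (j : 'I_k) :
  let site1 : 'I_n := Ordinal hn in
  let Mj := (\sum_(s < k | (j <= s)%N) m s)%N in
  let Mj1 := (\sum_(s < k | (j < s)%N) m s)%N in
  \sum_(w | valid m w) pi w * jump_rate x t w site1 j
  = qint t Mj * Htilde x t (Mj - 1) / Htilde x t Mj
    - qint t Mj1 * Htilde x t (Mj1 - 1) / Htilde x t Mj1.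
Proof.
move=> site1 Mj Mj1.
under eq_bigr do rewrite jump_rate_occupancy mulrBr.
by rewrite sumrB !(current_geq hpi hn hx ht).
Qed.
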